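(* Let $n$ be an odd integer, and let $a$ and $b$ be distinct positive integers with $a+b=n$. Let $X$ be the circulant graph $X(\mathbb{Z}_{2n}, \{a,-a,b,-b\})$, whose vertex set is $\mathbb{Z}_{2n}$ and in which $u\sim v$ if and only if $v-u\in\{a,-a,b,-b\} \pmod{2n}$; it is a $4$-regular graph. Then the Grover discrete quantum walk on $X$ admits perfect state transfer from vertex $0$ to vertex $n$ at time $2n$, that is, \[U^{2n}\left(\tfrac{1}{2}\, e_0\otimes \mathbf{1}\right) = \tfrac{1}{2}\, e_n\otimes \mathbf{1}.\]
   Context: Let $X$ be a $d$-regular graph on $n$ vertices. Replace each edge $\{u,v\}$ by the two arcs $(u,v)$ and $(v,u)$. The state space is $\mathbb{C}^{nd}$, the space of complex functions on the arcs, with the standard inner product; it is identified with $\mathbb{C}^n\otimes\mathbb{C}^d$, where the arc $(u,v)$ corresponds to the vertex $u$ (its tail) together with one of the $d$ coin directions at $u$. The transition operator is $U=R(I\otimes G)$, where $R$ is the arc-reversal permutation matrix, $(Rf)(u,v)=f(v,u)$, and $G=\frac{2}{d}J-I$ is the $d\times d$ Grover coin ($J$ the all-ones matrix), so that $\big((I\otimes G)f\big)(u,v)=\frac{2}{d}\sum_{w\sim u} f(u,w)-f(u,v)$. For a vertex $u$, $e_u\otimes\mathbf{1}$ denotes the vector that is $1$ on every arc with tail $u$ and $0$ elsewhere, so $\frac{1}{\sqrt d}e_u\otimes\mathbf{1}$ is the uniform superposition over the outgoing arcs of $u$. The graph $X$ admits perfect state transfer from $u$ to $v$ at time $k$ if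 $U^k\left(\frac{1}{\sqrt d}e_u\otimes\mathbf{1}\right)=\frac{1}{\sqrt d}e_v\otimes\mathbf{1}$. *)

From mathcomp Require Import all_boot all_order all_algebra all_field.
Set Implicit Arguments. Unset Strict Implicit. Unset Printing Implicit Defensive.
Import GRing.Theory Num.Theory.
Local Open Scope ring_scope.

Section GroverWalk.
Variables (T : finType) (adj : rel T).

Definition arc := {x : T * T | adj x.1 x.2}.

Definition tail (e : arc) : T := (val e).1.
Definition head (e : arc) : T := (val e).2.

Definition state := {ffun arc -> algC}.

Definition is_regular (d : nat) : Prop := forall u : T, #|[set v | adj u v]| = d.

Definition coin_op (d : nat) (f : state) : state :=
  [ffun e : arc => (2 / d%:R) * (\sum_(e' : arc | tail e' == tail e) f e') - f e].

(* arc reversal permutation matrix: (R f)(u,v) = f(v,u) *)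
Definition arc_rev_op (f : state) : state :=
  [ffun e : arc => \sum_(e' : arc | val e' == (head e, tail e)) f e'].

Definition grover_U (d : nat) (f : state) : state := arc_rev_op (coin_op d f).

(* (1/sqrt d) e_u (x) 1 *)
Definition uniform_at (d : nat) (u : T) : state :=
  [ffun e : arc => if tail e == u then (sqrtC d%:R)^-1 else 0].

Definition pst (d : nat) (u v : T) (k : nat) : Prop :=
  iter k (grover_U d) (uniform_at d u) = uniform_at d v.

End GroverWalk.

Definition circulant (m : nat) (S : seq 'Z_m) : rel 'Z_m :=
  fun u v => (v - u) \in S.

From Pilot Require Import Defs.
From mathcomp Require Import all_boot all_order all_algebra all_field.
From mathcomp Require Import ring zify.
Set Implicit Arguments. Unset Strict Implicit. Unset Printing Implicit Defensive.
Import GRing.Theory Num.Theory.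
Local Open Scope ring_scope.

(* Proof idea: the uniform state at a vertex depends only on the tail of each
   arc.  Split such a tail function g into the part (g u + g (u + n)) / 2,
   invariant under u |-> u + n, and the part (g u - g (u + n)) / 2, which
   changes sign.  Since a = n - b, modulo n every vertex v sees its neighbours
   v + a and v - a twice each; so on arc functions that are n-periodic in both
   endpoints, the walk is the straight-ahead shift (u, v) |-> (v, 2v - u),
   whose 2n-th power is the identity on Z_2n.  On the sign-changing part one
   step turns the tail function into the same head function, and a second step
   gives minus the tail function, because the values at the four neighbours
   cancel in pairs (v + a = (v - b) + n).  As n is odd, after 2n steps the
   first part is unchanged and the second is negated, which leaves
   g (u + n). *)

Section GroverWalkOnArcFunctions.
Variables (T : finType) (adj : rel T).

Definition arcfun (F : T -> T -> algC) : state adj :=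
  [ffun e => F (tail e) (Defs.head e)].

Lemma eq_arcfun (F G : T -> T -> algC) :
  (forall u v, adj u v -> F u v = G u v) -> arcfun F = arcfun G.
Proof. by move=> eqFG; apply/ffunP => e; rewrite !ffunE eqFG //; exact: valP e. Qed.

Lemma uniform_atE d x :
  uniform_at adj d x = arcfun (fun u _ => if u == x then (sqrtC d%:R)^-1 else 0).
Proof. by apply/ffunP => e; rewrite !ffunE. Qed.

Lemma grover_UD d : {morph @grover_U _ adj d : f g / f + g}.
Proof.
move=> f g; apply/ffunP => e; rewrite !ffunE -big_split; apply: eq_bigr => e' _.
rewrite !ffunE; under eq_bigr do rewrite ffunE.
by rewrite big_split /=; ring.
Qed.

Lemma grover_UN d : {morph @grover_U _ adj d : f / - f}.
Proof.
move=> f; apply/ffunP => e; rewrite !ffunE -sumrN; apply: eq_bigr => e' _.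
rewrite !ffunE; under eq_bigr do rewrite ffunE.
by rewrite sumrN /=; ring.
Qed.

Lemma iter_grover_UD d k : {morph iter k (@grover_U _ adj d) : f g / f + g}.
Proof. by move=> f g; elim: k => //= k ->; rewrite grover_UD. Qed.

Lemma iter_grover_UN d k : {morph iter k (@grover_U _ adj d) : f / - f}.
Proof. by move=> f; elim: k => //= k ->; rewrite grover_UN. Qed.

Lemma sum_out_arcs (g : T -> algC) v :
  \sum_(e : Defs.arc adj | tail e == v) g (Defs.head e) = \sum_(w | adj v w) g w.
Proof.
have head_adj (e : Defs.arc adj) : tail e == v -> adj v (Defs.head e).
  by move=> /eqP <-; exact: valP e.
rewrite (partition_big (@Defs.head _ _) (adj v) head_adj).
apply: eq_bigr => w vw.
by rewrite (big_pred1 (exist (fun x : T * T => adj x.1 x.2) (v, w) vw)).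
Qed.

Hypothesis adj_sym : symmetric adj.

Lemma grover_U_arcfun d F :
  @grover_U _ adj d (arcfun F) =
  arcfun (fun u v => 2 / d%:R * (\sum_(w | adj v w) F v w) - F v u).
Proof.
apply/ffunP => e; rewrite !ffunE.
have rev_adj : adj (Defs.head e, tail e).1 (Defs.head e, tail e).2.
  by rewrite adj_sym; exact: valP e.
rewrite (big_pred1 (exist (fun x : T * T => adj x.1 x.2) _ rev_adj)) // ffunE /=.
rewrite -(sum_out_arcs (F (Defs.head e))) ffunE.
by congr (_ * _ - _); apply: eq_bigr => e' /eqP tail_e'; rewrite ffunE tail_e'.
Qed.

Lemma grover_U_tail d (g : T -> algC) : is_regular adj d -> d != 0%N ->
  @grover_U _ adj d (arcfun (fun u _ => g u)) = arcfun (fun _ v => g v).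
Proof.
move=> reg d_neq0; rewrite grover_U_arcfun; apply/ffunP => e; rewrite !ffunE.
rewrite (eq_bigl (fun w => w \in [set w | adj (Defs.head e) w])); last by move=> w; rewrite inE.
have d_neq0R : d%:R != 0 :> algC by rewrite pnatr_eq0.
by rewrite sumr_const reg -mulr_natr; field.
Qed.

End GroverWalkOnArcFunctions.

Arguments arcfun {T adj} F.

Section Circulant.
Variables (m : nat) (S : seq 'Z_m).

Lemma big_circulant (R : Type) (idx : R) (op : Monoid.com_law idx) (G : 'Z_m -> R) v :
  uniq S -> \big[op/idx]_(w | circulant S v w) G w = \big[op/idx]_(s <- S) G (v + s).
Proof.
move=> S_uniq; rewrite (reindex (fun s => v + s)) /=; last first.
  by apply: onW_bij; exists (fun w => w - v) => x /=; rewrite addrC ?addKr ?addrNK.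
by rewrite (big_uniq _ S_uniq); apply: eq_bigl => s; rewrite /circulant addrC addKr.
Qed.

Lemma circulant_regular : uniq S -> is_regular (circulant S) (size S).
Proof.
move=> S_uniq u; rewrite -sum1_card (eq_bigl (circulant S u)); last by move=> v; rewrite inE.
by rewrite (big_circulant _ (fun _ => 1%N)) // big_const_seq count_predT iter_addn_0 mul1n.
Qed.

Lemma circulant_sym : {in S, forall s, - s \in S} -> symmetric (circulant S).
Proof.
move=> S_opp u v; rewrite /circulant.
by apply/idP/idP => /S_opp; rewrite opprB.
Qed.

End Circulant.

Section AntipodalTransfer.
Variables (n a b : nat).
Hypotheses (n_odd : odd n) (a_gt0 : (0 < a)%N) (b_gt0 : (0 < b)%N)
  (a_neq_b : a <> b) (abn : (a + b)%N = n).

Local Notation Z := 'Z_(2 * n).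
Local Notation N := (n%:R : Z).
Local Notation S := [:: (a%:R : Z); - a%:R; b%:R; - b%:R].
Local Notation X := (circulant S).
Local Notation U := (@grover_U _ X 4).
Local Notation tailfun g := (@arcfun _ X (fun u _ => g u)).
Local Notation headfun g := (@arcfun _ X (fun _ v => g v)).

Lemma Zn_gt1 : (1 < 2 * n)%N.
Proof. lia. Qed.

Lemma eqZ_nat x y : (x < 2 * n)%N -> (y < 2 * n)%N -> ((x%:R : Z) == y%:R) = (x == y).
Proof.
by move=> x_lt y_lt; rewrite -val_eqE /= !(val_Zp_nat Zn_gt1) !modn_small.
Qed.

Lemma oppZ_nat k : (k <= 2 * n)%N -> - (k%:R : Z) = (2 * n - k)%:R.
Proof.
move=> k_le; apply/eqP; rewrite eq_sym -subr_eq0 opprK -natrD subnK //.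
by rewrite pchar_Zp ?Zn_gt1.
Qed.

Lemma S_uniq : uniq S.
Proof.
rewrite /= !inE !oppZ_nat; try lia.
by rewrite !eqZ_nat; lia.
Qed.

Lemma X_sym : symmetric X.
Proof.
apply: circulant_sym => s.
by rewrite !inE => /or4P [] /eqP ->; rewrite ?opprK eqxx ?orbT.
Qed.

Lemma X_regular : is_regular X 4.
Proof. exact: circulant_regular S_uniq. Qed.

Lemma oppZn : - N = N.
Proof. by rewrite oppZ_nat; [congr _%:R|]; lia. Qed.

Lemma addZnn : N + N = 0.
Proof. by rewrite -{1}oppZn addNr. Qed.

Lemma natZ_ab : N = a%:R + b%:R.
Proof. by rewrite -natrD abn. Qed.

Lemma addZa v : v + a%:R = v - b%:R + N.
Proof. by rewrite natZ_ab; ring. Qed.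

Lemma subZa v : v - a%:R = v + b%:R + N.
Proof. by rewrite -oppZn natZ_ab; ring. Qed.

Definition biperiodic (L : Z -> Z -> algC) :=
  forall u v, L (u + N) v = L u v /\ L u (v + N) = L u v.

Lemma grover_U_biperiodic L : biperiodic L ->
  U (arcfun L) = arcfun (fun u v => L v (v + v - u)).
Proof.
move=> L_per; rewrite (grover_U_arcfun X_sym); apply: eq_arcfun => u v.
rewrite (big_circulant _ (L v)) ?S_uniq // !big_cons big_nil /= addr0.
rewrite addZa subZa !(proj2 (L_per _ _)) /circulant => vu_in_S.
have -> : u = v - (v - u) by ring.
move: (v - u) vu_in_S => t; have -> : v + v - (v - t) = v + t by ring.
have four_neq0 : 4%:R != 0 :> algC by rewrite pnatr_eq0.
rewrite !inE => /or4P [] /eqP ->;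
  by rewrite ?opprK ?addZa ?subZa ?(proj2 (L_per _ _)); field.
Qed.

Lemma biperiodic_reflect L : biperiodic L -> biperiodic (fun u v => L v (v + v - u)).
Proof.
move=> L_per u v; split.
- by rewrite -{1}oppZn opprD opprK addrA (proj2 (L_per _ _)).
- have -> : v + N + (v + N) - u = v + v - u + (N + N) by ring.
  by rewrite addZnn addr0 (proj1 (L_per _ _)).
Qed.

Lemma iter_grover_U_biperiodic k L : biperiodic L ->
  iter k U (arcfun L) = arcfun (fun u v => L (u + (v - u) *+ k) (v + (v - u) *+ k)).
Proof.
elim: k L => [|k IHk] L L_per.
  by apply/ffunP => e; rewrite !ffunE !mulr0n !addr0.
rewrite iterSr grover_U_biperiodic // IHk; last exact: biperiodic_reflect.
apply/ffunP => e; rewrite !ffunE mulrS; set u := tail e; set v := Defs.head e.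
by congr (L _ _); ring.
Qed.

Lemma iter_2n_biperiodic L : biperiodic L -> iter (2 * n) U (arcfun L) = arcfun L.
Proof.
move=> L_per; rewrite iter_grover_U_biperiodic //.
have mulrn_2n (x : Z) : x *+ (2 * n) = 0 by rewrite -mulr_natr pchar_Zp ?Zn_gt1 ?mulr0.
by apply/ffunP => e; rewrite !ffunE !mulrn_2n !addr0.
Qed.

Definition antiperiodic (g : Z -> algC) := forall x, g (x + N) = - g x.

Lemma grover_U_head g : antiperiodic g -> U (headfun g) = - tailfun g.
Proof.
move=> g_anti; rewrite (grover_U_arcfun X_sym); apply/ffunP => e; rewrite !ffunE.
rewrite (big_circulant _ g) ?S_uniq // !big_cons big_nil /= addr0 addZa subZa !g_anti.
by ring.
Qed.

Lemma iter_grover_U_antiperiodic k g : antiperiodic g ->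
  iter (2 * k) U (tailfun g) = if odd k then - tailfun g else tailfun g.
Proof.
move=> g_anti; elim: k => [//|k IHk].
rewrite mulnS addnC iterD /= (grover_U_tail X_sym _ X_regular) // grover_U_head //.
by rewrite iter_grover_UN IHk /=; case: (odd k); rewrite ?opprK.
Qed.

Lemma iter_2n_tail g :
  iter (2 * n) U (tailfun g) = tailfun (fun u => g (u + N)).
Proof.
pose L (u _ : Z) := (g u + g (u + N)) / 2.
pose h u := (g u - g (u + N)) / 2.
have L_per : biperiodic L by move=> u v; rewrite /L -addrA addZnn addr0 addrC.
have h_anti : antiperiodic h.
  by move=> x; rewrite /h -addrA addZnn addr0 -mulNr opprB.
have two_neq0 : 2 != 0 :> algC by rewrite pnatr_eq0.
have -> : tailfun g = arcfun L + tailfun h.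
  by apply/ffunP => e; rewrite !ffunE /L /h; field.
rewrite iter_grover_UD iter_2n_biperiodic // iter_grover_U_antiperiodic // n_odd.
by apply/ffunP => e; rewrite !ffunE /L /h; field.
Qed.

Lemma pst_0_n : pst X 4 0 N (2 * n).
Proof.
rewrite /pst !uniform_atE iter_2n_tail.
by apply/ffunP => e; rewrite !ffunE addr_eq0 oppZn.
Qed.

End AntipodalTransfer.

Unset Implicit Arguments.

Theorem mainTheorem1 (n a b : nat) :
  odd n -> (0 < a)%N -> (0 < b)%N -> a <> b -> (a + b)%N = n ->
  let X := circulant [:: (a%:R : 'Z_(2 * n)); - a%:R; b%:R; - b%:R] in
  is_regular X 4 /\ pst X 4 0 (n%:R) (2 * n).
Proof. by move=> n_odd a_gt0 b_gt0 a_neq_b abn X; split; [apply: X_regular | apply: pst_0_n]. Qed.
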